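(* In the setting described in the context, for all $g,g'\in\mathcal{G}$, $$(g'\circ g)_\star\nu=g'_\star\big(g_\star\nu\big).$$
   Context: Let $(\mathcal{X},\Sigma)$ be a measurable space, $\Phi^t$ a flow on $\mathcal{X}$ (bijective measurable maps, $\Phi^{t_1}\circ\Phi^{t_2}=\Phi^{t_1+t_2}$, jointly measurable), $f_\sharp$ push-forward, $\mu$ an invariant probability measure ($\Phi^t_\sharp\mu=\mu$ for all $t$). Let $h^a$, $a>0$, be bijective measurable maps and $\mathcal{G}$ a group of bijective measurable maps of $\mathcal{X}$ with $h^{a_1}\circ h^{a_2}=h^{a_1a_2}$, $\Phi^t\circ g=g\circ\Phi^t$, $g\circ h^a=h^a\circ g$, $\Phi^t\circ h^a=h^a\circ\Phi^{t/a}$ for all $a,a_1,a_2>0$, $t$, $g\in\mathcal{G}$. $\mathcal{Y}\subset\mathcal{X}$ is a representative set: for every $x$ there is a unique $a=A(x)>0$ with $h^a(x)\in\mathcal{Y}$, $A$ measurable with $\int A\,d\mu<\infty$; $P(x)=h^{A(x)}(x)$. Standing assumption: $\int A\circ g\,d\mu<\infty$ for every $g\in\mathcal{G}$. For a measure $\rho$ and positive measurable $B$ with $0<\int B\,d\rho<\infty$, $\rho_B$ is the probability measure with $d\rho_B/d\rho=B/\int B\,d\rho$. Let $\nu=P_\sharp\mu_A$ (the invariant measure of the normalized flow $P\circ\Phi^\tau_A$ on $\mathcal{Y}$). For $g\in\mathcal{G}$ and a probability measure $\rho$ on $\mathcal{Y}$ with $\int A\circ g\,d\rho<\infty$, define $g_\star\rho=(P\circ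 g)_\sharp\rho_{A\circ g}$; under the standing assumption, all measures in the claim are well defined. *)

From HB Require Import structures.
From mathcomp Require Import all_boot all_order all_algebra.
From mathcomp Require Import all_classical all_reals all_analysis.
Set Implicit Arguments. Unset Strict Implicit. Unset Printing Implicit Defensive.
Import Order.TTheory GRing.Theory Num.Theory.
Local Open Scope classical_set_scope.
Local Open Scope ring_scope.

Section defs.
Context d (T : measurableType d) (R : realType).

Definition dens (rho : set T -> \bar R) (B : T -> R) : set T -> \bar R :=
  fun S => ((\int[rho]_(x in S) (B x)%:E) *
            ((fine (\int[rho]_x (B x)%:E))^-1)%:E)%E.

Definition projP (h : R -> T -> T) (A : T -> R) : T -> T := fun x => h (A x) x.

Definition nuA (h : R -> T -> T) (A : T -> R) (mu : set T -> \bar R) :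
  set T -> \bar R := pushforward (dens mu A) (projP h A).

Definition gstar (h : R -> T -> T) (A : T -> R) (g : T -> T)
  (rho : set T -> \bar R) : set T -> \bar R :=
  pushforward (dens rho (A \o g)) (projP h A \o g).

End defs.

From HB Require Import structures.
From mathcomp Require Import all_boot all_order all_algebra.
From mathcomp Require Import all_classical all_reals all_analysis.
From mathcomp Require Import measurable_realfun.
Import Order.TTheory GRing.Theory Num.Theory.
Local Open Scope classical_set_scope.
Local Open Scope ring_scope.
Set Implicit Arguments. Unset Strict Implicit.

(* Write Q_g := (P o g)_# mu_(A o g), so that nu = Q_id. A map k commuting
   with every h^a satisfies k (P x) = h^(A x) (k x), hence
   A (k (P x)) * A x = A (k x) and P (k (P x)) = P (k x). Integrating against
   Q_g, i.e. pushing forward mu with density A o g, these two identities give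
   k_* Q_g = Q_(k o g). Applied to (g' o g, id), to (g, id) and to (g', g),
   both sides of the claim become Q_(g' o g). *)

Section density.
Context d (T : measurableType d) (R : realType).
Local Open Scope ereal_scope.
Import HBNNSimple.

Lemma eq_setfun_integral (m1 m2 : set T -> \bar R) D (f : T -> \bar R) :
  (forall S, measurable S -> m1 S = m2 S) ->
  \int[m1]_(x in D) f x = \int[m2]_(x in D) f x.
Proof.
move=> m12; have e (g : {nnsfun T >-> R}) : sintegral m1 g = sintegral m2 g.
  by apply: eq_fsbigr => r _; rewrite m12.
by rewrite /integral; congr (ereal_sup _ - ereal_sup _); apply: eq_imagel => g _ /=.
Qed.

Lemma integral_gt0 (m : {measure set T -> \bar R}) (f : T -> R) :
  measurable_fun setT f -> (forall x, 0 < f x)%R -> m setT != 0 ->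
  0 < \int[m]_x (f x)%:E.
Proof.
move=> mf f0 m0; rewrite lt0e integral_ge0 ?andbT => [|x _]; last first.
  by rewrite lee_fin ltW.
apply: contra m0 => /eqP intf0.
have : \int[m]_x `|(f x)%:E| = 0.
  by rewrite -intf0; apply: eq_integral => x _; rewrite gee0_abs // lee_fin ltW.
have mEf : measurable_fun setT (EFin \o f) by exact/measurable_EFinP.
move/(ae_eq_integral_abs m measurableT mEf) => [N [mN mN0 fN]].
rewrite eq_le measure_ge0 andbT -mN0 le_measure ?inE // => x _.
by apply: fN => /(_ I) /= /eqP; rewrite eqe gt_eqF.
Qed.

Lemma fineMr (x : \bar R) (c : R) : (0 < c)%R -> fine (x * c%:E) = (fine x * c)%R.
Proof.
by move=> c0; case: x => [r| |] /=; rewrite ?mul0r // (gt0_mulye, gt0_mulNye) ?lte_fin.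
Qed.

Lemma dens_ge0 (m : {measure set T -> \bar R}) (B : T -> R) S :
  (forall x, 0 <= B x)%R -> 0 <= dens m B S.
Proof.
move=> B0; rewrite mule_ge0 ?lee_fin ?invr_ge0 ?fine_ge0 //;
  by apply: integral_ge0 => x _; rewrite lee_fin.
Qed.

Lemma densE (m : {measure set T -> \bar R}) (B : T -> R) S :
  measurable_fun setT B -> (forall x, 0 <= B x)%R -> measurable S ->
  dens m B S = \int[m]_(x in S) (B x * (fine (\int[m]_x (B x)%:E))^-1)%:E.
Proof.
move=> mB B0 mS; under eq_integral do rewrite EFinM.
rewrite ge0_integralZr //.
- exact/measurable_EFinP/measurable_funTS.
- by move=> x _; rewrite lee_fin.
- by rewrite lee_fin invr_ge0 fine_ge0 // integral_ge0 // => x _; rewrite lee_fin.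
Qed.

Lemma eq_dens (m1 m2 : set T -> \bar R) (B : T -> R) :
  (forall S, measurable S -> m1 S = m2 S) -> dens m1 B = dens m2 B.
Proof.
by move=> m12; apply/funext => S; rewrite /dens !(eq_setfun_integral _ _ m12).
Qed.

Lemma dens_scale (m : {measure set T -> \bar R}) (B : T -> R) (c : R) S :
  measurable_fun setT B -> (forall x, 0 <= B x)%R -> (0 < c)%R -> measurable S ->
  dens m (fun x => B x * c)%R S = dens m B S.
Proof.
move=> mB B0 c0 mS.
have intZr D : measurable D ->
    \int[m]_(x in D) (B x * c)%:E = \int[m]_(x in D) (B x)%:E * c%:E.
  move=> mD; under eq_integral do rewrite EFinM.
  rewrite ge0_integralZr ?lee_fin ?ltW //.
    exact/measurable_EFinP/measurable_funTS.
  by move=> x _; rewrite lee_fin.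
rewrite /dens !intZr // fineMr // invfM EFinM muleACA -EFinM mulfV ?gt_eqF //.
by rewrite mule1.
Qed.

Lemma eq_gstar (h : R -> T -> T) (A : T -> R) g (rho1 rho2 : set T -> \bar R) :
  (forall S, measurable S -> rho1 S = rho2 S) -> gstar h A g rho1 = gstar h A g rho2.
Proof. by move=> rho12; rewrite /gstar (eq_dens _ rho12). Qed.

(* The measurability and positivity proofs are arguments so that canonical
   measure structures can be attached to [dens m B]. *)
Definition dens_measure (m : {measure set T -> \bar R}) (B : T -> R)
  of measurable_fun setT B & (forall x, 0 <= B x)%R := dens m B.

Section dens_measure_instance.
Variables (m : {measure set T -> \bar R}) (B : T -> R).
Hypotheses (mB : measurable_fun setT B) (B0 : forall x, (0 <= B x)%R).
Local Notation nu := (dens_measure m mB B0).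

Let nu0 : nu set0 = 0.
Proof. by rewrite /nu /dens_measure /dens integral_set0 mul0e. Qed.

Let nu_ge0 S : 0 <= nu S.
Proof. exact: dens_ge0. Qed.

Let nu_sigma_additive : semi_sigma_additive nu.
Proof.
move=> F mF tF mUF; rewrite /dens_measure [X in _ --> X]densE //.
rewrite (_ : (fun n => _) = fun n => \sum_(0 <= i < n)
    \int[m]_(x in F i) (B x * (fine (\int[m]_x (B x)%:E))^-1)%:E); last first.
  by apply/funext => n; apply: eq_bigr => i _; rewrite densE.
apply: semi_sigma_additive_nng_induced => //.
- exact/measurable_EFinP/measurable_funM.
- move=> x; rewrite lee_fin mulr_ge0 ?invr_ge0 ?fine_ge0 // integral_ge0 // => y _.
  by rewrite lee_fin.
Qed.

HB.instance Definition _ := isMeasure.Build _ _ _ nu nu0 nu_ge0 nu_sigma_additive.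

(* [nu setT] is 1, or 0 when the normalising integral is infinite
   (then [fine] returns 0). *)
Let nu_setT_lty : nu setT < +oo.
Proof.
rewrite /nu /dens_measure /dens.
by case: (\int[m]_x (B x)%:E) => [r| |] /=; rewrite ?invr0 ?mule0 // -EFinM ltry.
Qed.

HB.instance Definition _ :=
  Measure_isFinite.Build _ _ _ nu (lty_fin_num_fun nu_setT_lty).

End dens_measure_instance.

Section integral_dens_measure.
Variables (m : {sigma_finite_measure set T -> \bar R}) (B : T -> R).
Hypotheses (mB : measurable_fun setT B) (B0 : forall x, (0 <= B x)%R).
Local Notation nu := (dens_measure m mB B0).
Local Notation b := (fun x => (B x * (fine (\int[m]_x (B x)%:E))^-1)%:E).

Let mb : measurable_fun setT b.
Proof. exact/measurable_EFinP/measurable_funM. Qed.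

Lemma dens_measure_dominates : nu `<< m.
Proof.
apply/null_content_dominatesP => S mS mS0; rewrite /dens_measure densE //.
exact: null_set_integral (measurable_funTS mb) mS0.
Qed.

Let RN := Radon_Nikodym_SigmaFinite.f nu m.

Let ae_eq_RN E : measurable E -> ae_eq m E RN b.
Proof.
move=> mE; apply: integral_ae_eq => //.
- exact/integrableS/(Radon_Nikodym_SigmaFinite.f_integrable dens_measure_dominates).
- exact: measurable_funTS.
- move=> F _ mF; rewrite -Radon_Nikodym_SigmaFinite.f_integral //.
    exact: densE.
  exact: dens_measure_dominates.
Qed.

Lemma integral_dens_measure (f : T -> \bar R) E : (forall x, 0 <= f x) ->
  measurable E -> measurable_fun E f ->
  \int[nu]_(x in E) f x = \int[m]_(x in E) (f x * b x).
Proof.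
move=> f0 mE mf.
rewrite -(Radon_Nikodym_SigmaFinite.change_of_variables
  dens_measure_dominates f0 mE mf).
apply: ae_eq_integral => //.
- apply: emeasurable_funM => //; apply: measurable_funTS.
  exact: measurable_int (Radon_Nikodym_SigmaFinite.f_integrable dens_measure_dominates).
- exact/emeasurable_funM/measurable_funTS.
- exact/ae_eqe_mul2l/ae_eq_RN.
Qed.

End integral_dens_measure.

End density.

Section representative_set.
Context d (T : measurableType d) (R : realType).
Variables (h : R -> T -> T) (Y : set T) (A : T -> R)
  (mu : {sigma_finite_measure set T -> \bar R}).
Hypotheses (h_mul : forall a1 a2, 0 < a1 -> 0 < a2 -> h a1 \o h a2 = h (a1 * a2))
  (A_pos : forall x, 0 < A x) (A_Y : forall x, Y (h (A x) x))
  (A_uniq : forall x a, 0 < a -> Y (h a x) -> a = A x)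
  (A_meas : measurable_fun setT A) (P_meas : measurable_fun setT (projP h A))
  (mu_neq0 : mu setT != 0).
Local Notation P := (projP h A).
Local Notation gstar := (gstar h A).

Let h_div a x : 0 < a -> h (A x / a) (h a x) = h (A x) x.
Proof.
move=> a0; have /(congr1 (fun f => f x)) /= -> := h_mul (divr_gt0 (A_pos x) a0) a0.
by rewrite divfK ?gt_eqF.
Qed.

Lemma A_h a x : 0 < a -> A (h a x) = A x / a.
Proof. by move=> a0; apply/esym/A_uniq; rewrite ?divr_gt0 ?h_div. Qed.

Lemma projP_h a x : 0 < a -> P (h a x) = P x.
Proof. by move=> a0; rewrite /projP A_h ?h_div. Qed.

Section commuting_map.
Variable k : T -> T.
Hypothesis k_h : forall a, 0 < a -> k \o h a = h a \o k.

Lemma comm_projP x : k (P x) = h (A x) (k x).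
Proof. exact: (congr1 (fun f => f x) (k_h (A_pos x))). Qed.

Lemma A_comm_projP x : A (k (P x)) * A x = A (k x).
Proof. by rewrite comm_projP A_h // divfK ?gt_eqF. Qed.

Lemma projP_comm_projP x : P (k (P x)) = P (k x).
Proof. by rewrite comm_projP projP_h. Qed.

End commuting_map.

Lemma dens_gstar g (B : T -> R) E :
  measurable_fun setT g -> (\int[mu]_x (A (g x))%:E < +oo)%E ->
  measurable_fun setT B -> (forall x, 0 <= B x) -> measurable E ->
  dens (gstar g mu) B E =
  dens mu (fun x => B (P (g x)) * A (g x)) ((P \o g) @^-1` E).
Proof.
move=> mg Ag_lty mB B0 mE.
have mAg : measurable_fun setT (A \o g) by exact: measurableT_comp.
have Ag0 x : 0 <= (A \o g) x by exact/ltW/A_pos.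
have mPg : measurable_fun setT (P \o g) by exact: measurableT_comp.
pose c := fine (\int[mu]_x (A (g x))%:E).
have c_gt0 : 0 < c by apply: fine_gt0; rewrite Ag_lty andbT integral_gt0.
have gstarE : gstar g mu = pushforward (dens_measure mu mAg Ag0) (P \o g) by [].
have integral_gstar (D : set T) : measurable D ->
    (\int[gstar g mu]_(x in D) (B x)%:E =
     \int[mu]_(x in (P \o g) @^-1` D) (B (P (g x)) * A (g x) * c^-1)%:E)%E.
  move=> mD; have mBPg : measurable_fun setT (B \o (P \o g)).
    exact: measurableT_comp.
  rewrite gstarE ge0_integral_pushforward // ?integral_dens_measure //.
  - by apply: eq_integral => x _; rewrite /= -EFinM mulrA.
  - by move=> x; rewrite lee_fin.
  - by rewrite -[X in measurable X]setTI; exact: mPg.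
  - exact/measurable_funTS/measurable_EFinP.
  - exact/measurable_funTS/measurable_EFinP.
  - by move=> x _; rewrite lee_fin.
rewrite /dens !integral_gstar // preimage_setT.
apply: (@dens_scale _ _ _ mu (fun x => B (P (g x)) * A (g x))).
- exact/measurable_funM/mAg/measurableT_comp.
- by move=> x; rewrite mulr_ge0 // ltW.
- by rewrite invr_gt0.
- by rewrite -[X in measurable X]setTI; exact: mPg.
Qed.

Lemma gstar_comp k g S : (forall a, 0 < a -> k \o h a = h a \o k) ->
  measurable_fun setT k -> measurable_fun setT g ->
  (\int[mu]_x (A (g x))%:E < +oo)%E -> measurable S ->
  gstar k (gstar g mu) S = gstar (k \o g) mu S.
Proof.
move=> k_h mk mg Ag_lty mS.
have mPk : measurable_fun setT (P \o k) by exact: measurableT_comp.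
rewrite [LHS]dens_gstar //; last 3 first.
- exact: measurableT_comp.
- by move=> x; exact/ltW/A_pos.
- by rewrite -[X in measurable X]setTI; exact: mPk.
rewrite /gstar /pushforward.
have -> : (P \o g) @^-1` ((P \o k) @^-1` S) = (P \o (k \o g)) @^-1` S.
  by apply/seteqP; split => x; rewrite /preimage /= projP_comm_projP.
by congr dens; apply/funext => x; exact: A_comm_projP.
Qed.

End representative_set.

Theorem corollary1 (d : measure_display) (T : measurableType d) (R : realType)
  (Phi : R -> T -> T) (h : R -> T -> T) (G : set (T -> T))
  (mu : probability T R) (Y : set T) (A : T -> R)
  (* flow *)
  (Phi_bij : forall t, bijective (Phi t))
  (Phi_meas : forall t, measurable_fun setT (Phi t))
  (Phi_add : forall t1 t2, Phi t1 \o Phi t2 = Phi (t1 + t2))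
  (Phi_joint : measurable_fun setT (fun p : R * T => Phi p.1 p.2))
  (* invariant probability measure *)
  (mu_inv : forall t S, measurable S -> mu (Phi t @^-1` S) = mu S)
  (* the maps h^a, a > 0 *)
  (h_bij : forall a, 0 < a -> bijective (h a))
  (h_meas : forall a, 0 < a -> measurable_fun setT (h a))
  (h_mul : forall a1 a2, 0 < a1 -> 0 < a2 -> h a1 \o h a2 = h (a1 * a2))
  (* the group G *)
  (G_bij : forall g, G g -> bijective g)
  (G_meas : forall g, G g -> measurable_fun setT g)
  (G_id : G id)
  (G_comp : forall g1 g2, G g1 -> G g2 -> G (g1 \o g2))
  (G_inv : forall g, G g -> exists2 g', G g' & cancel g g' /\ cancel g' g)
  (* commutation relations *)
  (Phi_G : forall t g, G g -> Phi t \o g = g \o Phi t)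
  (G_h : forall g a, G g -> 0 < a -> g \o h a = h a \o g)
  (Phi_h : forall t a, 0 < a -> Phi t \o h a = h a \o Phi (t / a))
  (* representative set Y, with A(x) the unique a > 0 with h^a(x) in Y *)
  (A_pos : forall x, 0 < A x)
  (A_Y : forall x, Y (h (A x) x))
  (A_uniq : forall x a, 0 < a -> Y (h a x) -> a = A x)
  (A_meas : measurable_fun setT A)
  (A_int : (\int[mu]_x (A x)%:E < +oo)%E)
  (P_meas : measurable_fun setT (projP h A))
  (* standing assumption *)
  (AG_int : forall g, G g -> (\int[mu]_x (A (g x))%:E < +oo)%E) :
  forall g g', G g -> G g' ->
  forall S, measurable S ->
    gstar h A (g' \o g) (nuA h A mu) S
    = gstar h A g' (gstar h A g (nuA h A mu)) S.
Proof.
move=> g g' Gg Gg' S mS.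
have mu_neq0 : mu setT != 0 by rewrite probability_setT oner_neq0.
have comp := gstar_comp h_mul A_pos A_Y A_uniq A_meas P_meas mu_neq0.
have G_comm k : G k -> forall a, 0 < a -> k \o h a = h a \o k.
  by move=> Gk a; exact: G_h.
have mid : measurable_fun setT (@id T) by exact: measurable_id.
have Gg'g := G_comp _ _ Gg' Gg.
change (gstar h A (g' \o g) (gstar h A id mu) S =
        gstar h A g' (gstar h A g (gstar h A id mu)) S).
rewrite (comp (g' \o g) id S (G_comm _ Gg'g) (G_meas _ Gg'g) mid A_int mS).
rewrite (eq_gstar h A g' (fun E => comp g id E (G_comm _ Gg) (G_meas _ Gg) mid A_int)).
by rewrite (comp g' (g \o id) S (G_comm _ Gg') (G_meas _ Gg') (G_meas _ Gg)
  (AG_int _ Gg) mS).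
Qed.
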